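(* In the fuzzy setting described in the context, let $(A,B,R)$ be a fuzzy context and $(g,f)\in\mathcal{F}_N$. Then $g^{\uparrow_\pi}(a)\preceq_1 g^{\uparrow_N}(a)$ for all $a\in A$.
   Context: An adjoint triple with respect to posets $(P_1,\le_1),(P_2,\le_2),(P_3,\le_3)$ is a triple of maps $\&\colon P_1\times P_2\to P_3$, $\swarrow\colon P_3\times P_2\to P_1$, $\nwarrow\colon P_3\times P_1\to P_2$ with $x\le_1 z\swarrow y \iff x\& y\le_3 z\iff y\le_2 z\nwarrow x$. Fix complete lattices $(L_1,\preceq_1)$, $(L_2,\preceq_2)$, a bounded poset $(P,\le)$, an adjoint triple $(\&_1,\swarrow^1,\nwarrow_1)$ with respect to $L_1,P,L_2$ and an adjoint triple $(\&_2,\swarrow^2,\nwarrow_2)$ with respect to $P,L_2,L_1$. A fuzzy context is $(A,B,R)$ with nonempty sets $A,B$ and $R\colon A\times B\to P$. For $g\in L_2^B$, $f\in L_1^A$ define $g^{\uparrow_N}(a)=\inf\{g(b)\swarrow^1 R(a,b)\mid b\in B\}$, $f^{\downarrow^N}(b)=\inf\{f(a)\nwarrow_2 R(a,b)\mid a\in A\}$ and $g^{\uparrow_\pi}(a)=\sup\{R(a,b)\&_2 g(b)\mid b\in B\}$. $\mathcal{F}_N=\{(g,f)\mid g\in L_2^B, f\in L_1^A, g^{\uparrow_N}=f, f^{\downarrow^N}=g\}$. *)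

Set Implicit Arguments.

Record poset := Poset {
  pcar :> Type;
  ple : pcar -> pcar -> Prop;
  ple_refl : forall x, ple x x;
  ple_antisym : forall x y, ple x y -> ple y x -> x = y;
  ple_trans : forall x y z, ple x y -> ple y z -> ple x z
}.
Arguments ple {p} _ _.

Record bounded_poset := BoundedPoset {
  bp_poset :> poset;
  pbot : bp_poset;
  ptop : bp_poset;
  pbot_min : forall x, ple pbot x;
  ptop_max : forall x, ple x ptop
}.

Record complete_lattice := CompleteLattice {
  cl_poset :> poset;
  csup : (cl_poset -> Prop) -> cl_poset;
  cinf : (cl_poset -> Prop) -> cl_poset;
  csup_ub : forall (S : cl_poset -> Prop) x, S x -> ple x (csup S);
  csup_least : forall (S : cl_poset -> Prop) y,
      (forall x, S x -> ple x y) -> ple (csup S) y;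
  cinf_lb : forall (S : cl_poset -> Prop) x, S x -> ple (cinf S) x;
  cinf_greatest : forall (S : cl_poset -> Prop) y,
      (forall x, S x -> ple y x) -> ple y (cinf S)
}.

Arguments csup {c} S.
Arguments cinf {c} S.

Definition adjoint_triple (P1 P2 P3 : poset)
  (conj : P1 -> P2 -> P3) (sw : P3 -> P2 -> P1) (nw : P3 -> P1 -> P2) : Prop :=
  forall (x : P1) (y : P2) (z : P3),
    (ple x (sw z y) <-> ple (conj x y) z) /\
    (ple (conj x y) z <-> ple y (nw z x)).

Section Derivations.
Variables (L1 L2 : complete_lattice) (P : bounded_poset).
Variables (A B : Type) (R : A -> B -> P).

Definition upN (sw1 : L2 -> P -> L1) (g : B -> L2) : A -> L1 :=
  fun a => cinf (fun x : L1 => exists b, x = sw1 (g b) (R a b)).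

Definition downN (nw2 : L1 -> P -> L2) (f : A -> L1) : B -> L2 :=
  fun b => cinf (fun y : L2 => exists a, y = nw2 (f a) (R a b)).

Definition upPi (conj2 : P -> L2 -> L1) (g : B -> L2) : A -> L1 :=
  fun a => csup (fun x : L1 => exists b, x = conj2 (R a b) (g b)).

Definition in_FN (sw1 : L2 -> P -> L1) (nw2 : L1 -> P -> L2)
  (g : B -> L2) (f : A -> L1) : Prop :=
  upN sw1 g = f /\ downN nw2 f = g.
End Derivations.


(* If g = f^{down^N} then each R(a,b) &_2 g(b) lies below f(a) by adjointness,
   hence so does their supremum g^{up_pi}(a); and f(a) = g^{up_N}(a). *)

Section Derivations.
Variables (L1 L2 : complete_lattice) (P : bounded_poset).
Variables (conj2 : P -> L2 -> L1) (sw2 : L1 -> L2 -> P) (nw2 : L1 -> P -> L2).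
Hypothesis adj2 : adjoint_triple (P : poset) (L2 : poset) (L1 : poset) conj2 sw2 nw2.
Variables (A B : Type) (R : A -> B -> P).

Lemma downN_le_nw (f : A -> L1) (a : A) (b : B) :
  ple (downN L1 L2 P R nw2 f b) (nw2 (f a) (R a b)).
Proof. apply cinf_lb. exists a. reflexivity. Qed.

Lemma conj_downN_le (f : A -> L1) (a : A) (b : B) :
  ple (conj2 (R a b) (downN L1 L2 P R nw2 f b)) (f a).
Proof. apply (proj2 (proj2 (adj2 _ _ _))). apply downN_le_nw. Qed.

Lemma upPi_downN_le (f : A -> L1) (a : A) :
  ple (upPi L1 L2 P R conj2 (downN L1 L2 P R nw2 f) a) (f a).
Proof. apply csup_least. intros x [b ->]. apply conj_downN_le. Qed.

End Derivations.

Theorem mainTheorem10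
  (L1 L2 : complete_lattice) (P : bounded_poset)
  (conj1 : L1 -> P -> L2) (sw1 : L2 -> P -> L1) (nw1 : L2 -> L1 -> P)
  (conj2 : P -> L2 -> L1) (sw2 : L1 -> L2 -> P) (nw2 : L1 -> P -> L2)
  (adj1 : adjoint_triple (L1 : poset) (P : poset) (L2 : poset) conj1 sw1 nw1)
  (adj2 : adjoint_triple (P : poset) (L2 : poset) (L1 : poset) conj2 sw2 nw2)
  (A B : Type) (neA : inhabited A) (neB : inhabited B) (R : A -> B -> P)
  (g : B -> L2) (f : A -> L1)
  (hgf : in_FN L1 L2 P R sw1 nw2 g f) :
  forall a : A, ple (upPi L1 L2 P R conj2 g a) (upN L1 L2 P R sw1 g a).
Proof.
  intros a. destruct hgf as [upN_g downN_f].
  rewrite upN_g, <- downN_f.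
  apply upPi_downN_le with (sw2 := sw2); exact adj2.
Qed.
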